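(* Let $(A_\gamma)_{\gamma\in\Gamma}$ be a nonempty family of nontrivial commutative groups, let $S_\gamma\subseteq A_\gamma$ generate $A_\gamma$, let $A=\bigoplus_\gamma A_\gamma$ (each $A_\gamma$ viewed as a subgroup of $A$), and let $B$ be a commutative group. For $f\in B^A$ and $d\in\mathbb N$, the following are equivalent: (i) there exist $r\in\mathbb N$, indices $\gamma_1,\dots,\gamma_r\in\Gamma$, positive integers $d_1,\dots,d_r$ with $d_1+\dots+d_r=d$, and elements $a_{i,j}\in S_{\gamma_i}$ ($1\le i\le r$, $1\le j\le d_i$) such that $\big(\prod_{i=1}^r\prod_{j=1}^{d_i}\Delta_{a_{i,j}}\big)f\ne0$; (ii) $\operatorname{fdeg}(f)\ge d$.
   Context: For commutative groups $A,B$, $B^A$ denotes the commutative group (under pointwise addition) of all maps $A\to B$. For $a\in A$, the difference operator $\Delta_a:B^A\to B^A$ is $(\Delta_a f)(x)=f(x+a)-f(x)$; the empty product of such operators is the identity. Let $\widetilde{\mathbb N}=\mathbb N\cup\{-\infty,\infty\}$ ($\mathbb N=\{0,1,2,\dots\}$), totally ordered with $-\infty$ least and $\infty$ greatest. The functional degree $\operatorname{fdeg}(f)\in\widetilde{\mathbb N}$ of $f\in B^A$ is: $-\infty$ if $f=0$; otherwise the least $n\in\mathbb N$ such that $\Delta_{a_1}\cdots\Delta_{a_{n+1}}f=0$ for all $a_1,\dots,a_{n+1}\in A$; and $\infty$ if no such $n$ exists. *)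

From HB Require Import structures.
From mathcomp Require Import all_boot all_algebra.
From mathcomp Require Import boolp.
From Stdlib Require List.
Set Implicit Arguments. Unset Strict Implicit. Unset Printing Implicit Defensive.
Import GRing.Theory.
Local Open Scope ring_scope.

Definition Delta (A B : zmodType) (a : A) (f : A -> B) : A -> B :=
  fun x => f (x + a) - f x.

Definition Deltas (A B : zmodType) (s : seq A) (f : A -> B) : A -> B :=
  foldr (@Delta A B) f s.

Inductive ntilde := NMinf | NFin of nat | NPinf.

Definition ntilde_le (x y : ntilde) : bool :=
  match x, y with
  | NMinf, _ => true
  | _, NPinf => true
  | NFin m, NFin n => (m <= n)%N
  | _, _ => false
  end.

Definition killed (A B : zmodType) (n : nat) (f : A -> B) : Prop :=
  forall s : seq A, size s = n -> Deltas s f = (fun _ => 0).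

Definition fdeg (A B : zmodType) (f : A -> B) : ntilde :=
  match pselect (f = (fun _ => 0)) with
  | left _ => NMinf
  | right _ =>
    match pselect (exists n, `[< killed n.+1 f >]) with
    | left ex => NFin (ex_minn ex)
    | right _ => NPinf
    end
  end.

Section DirectSum.
Variables (Gam : Type) (A : Gam -> zmodType).

Definition finsupp (g : forall i, A i) : Prop :=
  exists s : list Gam, forall i, g i <> 0 -> List.In i s.

Definition dsum := {g : forall i, A i | finsupp g}.

HB.instance Definition _ := gen_eqMixin dsum.
HB.instance Definition _ := gen_choiceMixin dsum.


Lemma finsupp0 : finsupp (fun i => 0).
Proof. by exists nil => i; case. Qed.

Lemma finsuppN (g : forall i, A i) : finsupp g -> finsupp (fun i => - g i).
Proof.
case=> s hs; exists s => i hi; apply: hs => gi0; apply: hi; by rewrite gi0 oppr0.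
Qed.

Lemma finsuppD (g h : forall i, A i) :
  finsupp g -> finsupp h -> finsupp (fun i => g i + h i).
Proof.
case=> s hs [t ht]; exists (s ++ t)%list => i hi; apply List.in_or_app.
have [gi0|gi0] := eqVneq (g i) 0.
- right; apply: ht => hi0; apply: hi; by rewrite gi0 hi0 addr0.
- by left; apply: hs; apply/eqP.
Qed.

Definition dzero : dsum := exist _ _ finsupp0.
Definition dopp (x : dsum) : dsum := exist _ _ (finsuppN (proj2_sig x)).
Definition dadd (x y : dsum) : dsum :=
  exist _ _ (finsuppD (proj2_sig x) (proj2_sig y)).

Lemma dsum_ext (x y : dsum) : (forall i, proj1_sig x i = proj1_sig y i) -> x = y.
Proof.
case: x y => g hg [h hh] /= e.
have eg : g = h by apply: functional_extensionality_dep.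
subst h; congr exist; exact: Prop_irrelevance.
Qed.

Lemma daddA : associative dadd.
Proof. by move=> x y z; apply: dsum_ext => i /=; rewrite addrA. Qed.
Lemma daddC : commutative dadd.
Proof. by move=> x y; apply: dsum_ext => i /=; rewrite addrC. Qed.
Lemma dadd0 : left_id dzero dadd.
Proof. by move=> x; apply: dsum_ext => i /=; rewrite add0r. Qed.
Lemma daddN : left_inverse dzero dopp dadd.
Proof. by move=> x; apply: dsum_ext => i /=; rewrite addNr. Qed.

HB.instance Definition _ :=
  GRing.isZmodule.Build dsum daddA daddC dadd0 daddN.

Definition coord (x : dsum) (i : Gam) : A i := proj1_sig x i.

(* x lies in the copy of S_gamma inside A = (+)_i A_i :
   x is the image of an element of S_gamma under the canonical embedding. *)
Definition in_comp (gam : Gam) (S : A gam -> Prop) (x : dsum) : Prop :=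
  S (coord x gam) /\ forall i, i <> gam -> coord x i = 0.

End DirectSum.

Definition generates (G : zmodType) (S : G -> Prop) : Prop :=
  forall a : G, exists s : seq (int * G),
    (forall p, p \in s -> S p.2) /\ a = \sum_(p <- s) p.2 *~ p.1.

From Pilot Require Import Defs.
From HB Require Import structures.
From mathcomp Require Import all_boot all_algebra.
From mathcomp Require Import boolp.
Import GRing.Theory.
Local Open Scope ring_scope.
Set Implicit Arguments. Unset Strict Implicit. Unset Printing Implicit Defensive.

(* The difference operators commute and [Delta_a g = 0] says that [a] is a
   period of [g]; the periods of [g] form a subgroup of [A].  Hence if all
   products of [d] operators [Delta_a] with [a] in a generating set kill [f],
   then so do all products of [d] arbitrary operators: peel off the last
   operator, use induction for the other [d - 1], and extend from generators
   to the whole group by periodicity.  In [A = (+)_gamma A_gamma] the union of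
   the copies of the [S_gamma] generates [A], and [fdeg f >= d] just says that
   some [d]-fold product of difference operators does not kill [f]. *)

Definition generates_ind (G : zmodType) (S : G -> Prop) : Prop :=
  forall P : G -> Prop, P 0 -> (forall a b, P a -> P b -> P (a - b)) ->
    (forall a, S a -> P a) -> forall a, P a.

Lemma addr_closed_of_subr (G : zmodType) (P : G -> Prop) :
  P 0 -> (forall a b, P a -> P b -> P (a - b)) ->
  forall a b, P a -> P b -> P (a + b).
Proof.
move=> P0 PB a b Pa Pb; have -> : a + b = a - (0 - b) by rewrite sub0r opprK.
by apply: (PB) => //; apply: PB.
Qed.

Lemma generates_ind_of_lincomb (G : zmodType) (S : G -> Prop) :
  generates S -> generates_ind S.
Proof.
move=> genS P P0 PB PS a; have [s [sS ->]] := genS a.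
have PD := addr_closed_of_subr P0 PB.
have PMn u n : P u -> P (u *+ n).
  by move=> Pu; elim: n => [|n IHn]; rewrite ?mulr0n // mulrS; apply: (PD).
rewrite big_seq; apply: big_ind => // p /sS /PS Pp.
case: p.1 => n; first by rewrite -pmulrn; apply: (PMn).
by rewrite NegzE mulrNz -pmulrn -sub0r; apply: (PB) => //; apply: (PMn).
Qed.

Section DifferenceOperators.
Variables A B : zmodType.
Implicit Types (f g : A -> B) (s : seq A).

Definition period g (a : A) : Prop := forall x, g (x + a) = g x.

Lemma DeltaC (a b : A) g : Delta a (Delta b g) = Delta b (Delta a g).
Proof.
apply: functional_extensionality_dep => x; rewrite /Delta (addrAC x a b).
move: (g (x + b + a)) (g (x + a)) (g (x + b)) (g x) => p q r t.
by rewrite !opprB !addrA (addrAC p (- q)) (addrAC _ (- q)) (addrAC _ t (- r)).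
Qed.

Lemma Deltas_Delta s (a : A) f : Deltas s (Delta a f) = Delta a (Deltas s f).
Proof. by elim: s => //= b s ->; rewrite DeltaC. Qed.

Lemma Deltas_rcons s (a : A) f : Deltas (rcons s a) f = Deltas s (Delta a f).
Proof. exact: foldr_rcons. Qed.

Lemma Deltas0 s : Deltas s (fun _ : A => 0 : B) = (fun _ => 0).
Proof.
elim: s => //= a s ->; apply: functional_extensionality_dep => x.
by rewrite /Delta subrr.
Qed.

Lemma Delta_eq0P g (a : A) : Delta a g = (fun _ => 0) <-> period g a.
Proof.
split=> [Dg0 x | ga]; last first.
  by apply: functional_extensionality_dep => x; rewrite /Delta ga subrr.
by apply/eqP; rewrite -subr_eq0; apply/eqP; exact: (congr1 (fun h => h x) Dg0).
Qed.

Lemma period_generated (S : A -> Prop) g :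
  generates_ind S -> (forall a, S a -> period g a) -> forall a, period g a.
Proof.
move=> genS gS; apply: genS gS => [x | a b ga gb x]; first by rewrite addr0.
by rewrite -[LHS]gb -addrA subrK ga.
Qed.

Lemma killed_mono n m f : killed n f -> (n <= m)%N -> killed m f.
Proof.
move=> kf /subnK <-; elim: (m - n)%N => [|k IHk] s; first exact: kf.
by case: s => //= a s [/IHk ->]; apply/Delta_eq0P.
Qed.

Lemma killed_generated (S : A -> Prop) d f : generates_ind S ->
  (forall s, size s = d -> (forall a, a \in s -> S a) ->
     Deltas s f = (fun _ => 0)) -> killed d f.
Proof.
move=> genS; elim: d f => [|d IHd] f kSf s sz_s.
  by apply: kSf => //; rewrite (size0nil sz_s).
have kDf a : S a -> killed d (Delta a f).
  move=> Sa; apply: IHd => t sz_t tS; rewrite -Deltas_rcons.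
  apply: kSf => [|b]; first by rewrite size_rcons sz_t.
  by rewrite mem_rcons in_cons => /orP [/eqP -> | /tS].
case/lastP: s sz_s => [//|t a]; rewrite size_rcons => -[sz_t].
rewrite Deltas_rcons Deltas_Delta; apply/Delta_eq0P; move: a.
apply: period_generated genS _ => a Sa; apply/Delta_eq0P.
by rewrite -Deltas_Delta; apply: kDf.
Qed.

Lemma fdeg_geP d f : ntilde_le (NFin d) (fdeg f) <-> ~ killed d f.
Proof.
rewrite /fdeg; case: pselect => [f0 | fn0].
  by split=> [// | []] s _; rewrite f0 Deltas0.
case: pselect => [ex | nex]; last first.
  split=> // _ kf; apply: nex; exists d; apply/asboolP.
  by apply: killed_mono kf _.
case: ex_minnP => m /asboolP km min_m /=; split.
  case: d => [_ kf | d lt_dm kf]; first exact/fn0/(kf [::]).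
  by have := min_m d (asboolT kf); rewrite leqNgt lt_dm.
rewrite leqNgt => nkf; apply/negP => lt_md; apply: nkf.
by apply: killed_mono km lt_md.
Qed.

End DifferenceOperators.

Section DirectSum.
Variables (Gam : Type) (A : Gam -> zmodType).

Definition emb_fun (g : Gam) (v : A g) : forall i, A i :=
  fun i => match pselect (g = i) with
           | left e => eq_rect g (fun j => A j : Type) v i e
           | right _ => 0 end.

Lemma emb_finsupp g v : finsupp (@emb_fun g v).
Proof.
by exists (g :: nil) => i; rewrite /emb_fun; case: pselect => [e _|//]; left.
Qed.

Definition emb g v : dsum A := exist _ _ (@emb_finsupp g v).

Lemma coord_emb g (v : A g) : Defs.coord (emb v) g = v.
Proof.
rewrite /Defs.coord /= /emb_fun; case: pselect => [e | []] //.
by rewrite (Prop_irrelevance e erefl).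
Qed.

Lemma coord_emb_neq g (v : A g) i : g <> i -> Defs.coord (emb v) i = 0.
Proof. by move=> ne_gi; rewrite /Defs.coord /= /emb_fun; case: pselect. Qed.

Lemma coordB (x y : dsum A) i :
  Defs.coord (x - y) i = Defs.coord x i - Defs.coord y i.
Proof. by []. Qed.

Lemma embB g (u v : A g) : emb (u - v) = emb u - emb v.
Proof.
apply: dsum_ext => i /=; rewrite /emb_fun.
by case: pselect => [e | _]; [case: i / e | rewrite subr0].
Qed.

Lemma emb0 g : emb (0 : A g) = 0.
Proof. by rewrite -(subrr (0 : A g)) embB subrr. Qed.

Lemma in_comp_generated (S : forall i, A i -> Prop) :
  (forall i, generates_ind (S i)) ->
  generates_ind (fun x : dsum A => exists i, in_comp (S i) x).
Proof.
move=> genS P P0 PB PS; have PD := addr_closed_of_subr P0 PB.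
have Pemb g (v : A g) : P (emb v).
  move: v; apply: genS => [|u v Pu Pv|v Sv]; first by rewrite emb0.
    by rewrite embB; apply: (PB).
  apply: PS; exists g; split=> [|i ne_ig]; first by rewrite coord_emb.
  by apply: coord_emb_neq => e; apply: ne_ig.
move=> x; case: (proj2_sig x) => s; elim: s x => [|g s IHs] x supp_x.
  have -> : x = 0 => //; apply: dsum_ext => i.
  by apply: contrapT => /supp_x.
rewrite -(subrK (emb (Defs.coord x g)) x); apply: (PD) => //; apply: IHs => i.
rewrite -[sval _ i]/(Defs.coord _ i) coordB.
have [<- | ne_gi] := pselect (g = i); first by rewrite coord_emb subrr.
by rewrite coord_emb_neq // subr0 => /supp_x [e | //]; case: ne_gi.
Qed.

End DirectSum.

Lemma size_allpairs_iota (T : Type) r (dd : nat -> nat) (a : nat -> nat -> T) :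
  size [seq a i j | i <- iota 0 r, j <- iota 0 (dd i)] = (\sum_(i < r) dd i)%N.
Proof.
rewrite size_allpairs_dep sumnE big_map -(big_mkord xpredT dd).
by rewrite /index_iota subn0; apply: eq_bigr => i _; rewrite size_iota.
Qed.

Lemma allpairs_iota1_nth (T : Type) (s : seq T) (x0 : T) :
  [seq nth x0 s i | i <- iota 0 (size s), j <- iota 0 1] = s.
Proof.
rewrite (allpairs1r (fun i _ => nth x0 s i) _ (fun _ => 0%N)).
by rewrite -/(mkseq _ _) mkseq_nth.
Qed.

(* [A_nontriv] is not needed; [Gam_ne] only supplies the junk values of
   [gam] beyond [r]. *)
Theorem lemma3 (Gam : Type) (A : Gam -> zmodType)
  (Gam_ne : inhabited Gam)
  (A_nontriv : forall i, exists a : A i, a <> 0)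
  (S : forall i, A i -> Prop)
  (S_gen : forall i, generates (S i))
  (B : zmodType) (f : dsum A -> B) (d : nat) :
  (exists (r : nat) (gam : nat -> Gam) (dd : nat -> nat)
          (a : nat -> nat -> dsum A),
      (forall i, (i < r)%N -> (0 < dd i)%N) /\
      (\sum_(i < r) dd i)%N = d /\
      (forall i j, (i < r)%N -> (j < dd i)%N -> in_comp (S (gam i)) (a i j)) /\
      Deltas [seq a i j | i <- iota 0 r, j <- iota 0 (dd i)] f <> (fun _ => 0))
  <-> ntilde_le (NFin d) (fdeg f).
Proof.
rewrite fdeg_geP; split=> [[r [gam [dd [a [_ [sum_dd [_ Df]]]]]]] kf | nkf].
  by apply/Df/kf; rewrite size_allpairs_iota.
apply: contrapT => nDf; apply/nkf/(killed_generated (S := fun x =>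
  exists i, in_comp (S i) x)) => [|s sz_s sS].
  by apply: in_comp_generated => i; apply: generates_ind_of_lincomb.
apply: contrapT => Df; apply: nDf; case: Gam_ne => g0.
have [gam gamP] : {gam : nat -> Gam & forall i, (i < size s)%N ->
    in_comp (S (gam i)) (nth 0 s i)}.
  apply: (@choice _ _ (fun i g => (i < size s)%N -> in_comp (S g) (nth 0 s i))).
  move=> i; case: (ltnP i (size s)) => [/(mem_nth 0)/sS [g sg] | _].
    by exists g.
  by exists g0.
exists (size s), gam, (fun _ => 1%N), (fun i _ => nth 0 s i).
split=> //; split; first by rewrite sum_nat_const card_ord muln1.
by split=> [i j /gamP //|]; rewrite allpairs_iota1_nth.
Qed.
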